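(* Let $a_1,\dots,a_t$ be positive integers with $\sum_{i=1}^t a_i=2b$ for an integer $b$. Consider the two-machine instance with three chains of jobs $j^0_1\prec\dots\prec j^0_t$, $j^1_1\prec\dots\prec j^1_{t+1}$, $j^2_1\prec\dots\prec j^2_{t+1}$ (no precedence constraints between different chains), where $j^0_i$ has processing time $a_i$ and every $j^1_i$ and $j^2_i$ has processing time $2b$. Then there is a subset $S\subseteq\{1,\dots,t\}$ with $\sum_{i\in S}a_i=\sum_{i\notin S}a_i$ if and only if this instance has a feasible non-preemptive schedule on two identical machines with makespan at most $(2t+3)b$.
   Context: A schedule assigns each job $j$ a start time $s_j\in\mathbb N$; it is feasible if $s_i+p_i\le s_j$ whenever $i\prec j$ and at every time $t$ at most two jobs $j$ satisfy $t\in[s_j,s_j+p_j)$. The makespan is $\max_j(s_j+p_j)$. *)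

From mathcomp Require Import all_boot.
Set Implicit Arguments. Unset Strict Implicit. Unset Printing Implicit Defensive.

Definition feasible2 (J : finType) (p : J -> nat) (prec : J -> J -> Prop)
  (s : J -> nat) : Prop :=
  (forall i j, prec i j -> s i + p i <= s j) /\
  (forall x : nat, #|[pred j | (s j <= x) && (x < s j + p j)]| <= 2).

Definition makespan_le (J : finType) (p : J -> nat) (s : J -> nat) (M : nat) : Prop :=
  forall j, s j + p j <= M.

(* Jobs of the instance: chain 0 = j^0_1..j^0_t (indices 'I_t),
   chain 1 = j^1_1..j^1_{t+1}, chain 2 = j^2_1..j^2_{t+1} (indices 'I_t.+1). *)
Definition job (t : nat) : finType := ('I_t + ('I_t.+1 + 'I_t.+1))%type.

Definition ptime (t b : nat) (a : 'I_t -> nat) (j : job t) : nat :=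
  match j with
  | inl i => a i
  | inr _ => 2 * b
  end.

Definition prec (t : nat) (j k : job t) : Prop :=
  match j, k with
  | inl i, inl i' => (i < i')%N
  | inr (inl i), inr (inl i') => (i < i')%N
  | inr (inr i), inr (inr i') => (i < i')%N
  | _, _ => False
  end.

From mathcomp Require Import all_boot zify.
Set Implicit Arguments. Unset Strict Implicit. Unset Printing Implicit Defensive.

(* If S splits the a_i into two halves, start the m-th job of the first
   (second) long chain at 2bm plus the total length of the earlier short jobs
   in S (in the complement of S): after long job k this leaves a gap of length
   exactly a_k in the chain on the side of k, and short job k runs there.

   Conversely, in a schedule of makespan (2t+3)b the total work is twice the
   horizon, so at every time exactly two chains are busy.  A long chain has
   only b units of slack, so its m-th job starts in [2bm, 2bm+b]; hence it is
   busy at all residues in [b, 2b) mod 2b, and for each residue z < b it is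
   idle at exactly one time congruent to z.  A short job runs only when a long
   chain is idle, and must run whenever one is.  Taking short jobs modulo 2b
   thus covers every point of [0, b) exactly twice, once for each long chain,
   and a family of intervals covering [0, b) exactly twice contains a
   subfamily tiling [0, b): its jobs have total length b. *)

Definition active (J : finType) (p s : J -> nat) (x : nat) (j : J) : bool :=
  (s j <= x) && (x < s j + p j).

Lemma sum_indicator_interval M l d :
  \sum_(x < M) ((l <= x) && (x < l + d) : nat) = minn M (l + d) - minn M l.
Proof.
elim: M => [|M IH]; first by rewrite big_ord0; lia.
rewrite big_ord_recr /= IH; case: (leqP l M); case: (ltnP M (l + d)) => /=; lia.
Qed.

Lemma sum_card_active (J : finType) (p s : J -> nat) M :
  (forall j, s j + p j <= M) ->
  \sum_(x < M) #|[pred j | active p s x j]| = \sum_j p j.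
Proof.
move=> end_le.
have card_sum x : #|[pred j | active p s x j]| = \sum_j (active p s x j : nat).
  by rewrite -sum1_card big_mkcond /=; apply: eq_bigr => j _; rewrite inE; case: ifP.
rewrite (eq_bigr (fun x : 'I_M => \sum_j (active p s x j : nat))) => [|x _];
  last exact: card_sum.
rewrite exchange_big; apply: eq_bigr => j _.
by rewrite sum_indicator_interval; have := end_le j; lia.
Qed.

Lemma sum_bounded_eq (f : nat -> nat) c M :
  (forall x, x < M -> f x <= c) -> c * M <= \sum_(x < M) f x ->
  forall x, x < M -> f x = c.
Proof.
move=> f_le sum_ge x ltxM.
have sumB : \sum_(y < M) (c - f y) = 0.
  rewrite sumnB => [|y _]; last exact: f_le.
  by rewrite sum_nat_const card_ord; apply/eqP; rewrite subn_eq0 mulnC.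
have /eqP := sumB; rewrite sum_nat_eq0 => /forallP /(_ (Ordinal ltxM)) /= /eqP.
by have := f_le x ltxM; lia.
Qed.

Section DoubleCover.
Variables (K : finType) (y d : K -> nat) (b : nat).

Definition covers (k : K) (z : nat) : bool := (y k <= z) && (z < y k + d k).

Hypothesis d_pos : forall k, 0 < d k.
Hypothesis d_fit : forall k, y k + d k <= b.
Hypothesis cover_ge2 : forall z, z < b ->
  exists k1 k2, [/\ k1 != k2, covers k1 z & covers k2 z].
Hypothesis cover_le2 : forall z k1 k2 k3, z < b ->
  covers k1 z -> covers k2 z -> covers k3 z -> [|| k1 == k2, k1 == k3 | k2 == k3].

(* Otherwise the two intervals covering z also cover z - 1, as does the
   interval ending at z. *)
Lemma interval_starts_at z : z < b -> (z = 0 \/ exists j, y j + d j = z) ->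
  exists k, y k = z.
Proof.
move=> ltzb [z0|[j end_j]].
  by have [k [_ [_ /andP[ck _] _]]] := cover_ge2 ltzb; exists k; lia.
have [k1 [k2 [ne12 c1 c2]]] := cover_ge2 ltzb.
case: (eqVneq (y k1) z) => [|yk1]; first by exists k1.
case: (eqVneq (y k2) z) => [|yk2]; first by exists k2.
have cov_pred k : covers k z -> y k != z -> covers k z.-1.
  by rewrite /covers => /andP[] + + /eqP; lia.
have cj : covers j z.-1 by have := d_pos j; rewrite /covers; lia.
have lt_z1b : z.-1 < b := leq_ltn_trans (leq_pred z) ltzb.
have /or3P[] := cover_le2 lt_z1b cj (cov_pred _ c1 yk1) (cov_pred _ c2 yk2).
- by move/eqP=> ej; move: c1 end_j; rewrite /covers -ej; lia.
- by move/eqP=> ej; move: c2 end_j; rewrite /covers -ej; lia.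
- by rewrite (negbTE ne12).
Qed.

Lemma tiling_suffix n z : b - z <= n -> z <= b -> (z = 0 \/ exists j, y j + d j = z) ->
  exists S : {set K}, (forall k, k \in S -> z <= y k) /\ \sum_(k in S) d k = b - z.
Proof.
elim: n z => [|n IH] z lenz lezb z_end.
  by exists set0; split=> [k|]; rewrite ?inE ?big_set0; lia.
case: (eqVneq z b) => [->|nezb].
  by exists set0; split=> [k|]; rewrite ?inE ?big_set0 ?subnn.
have ltzb : z < b by rewrite ltn_neqAle nezb.
have [k yk] := interval_starts_at ltzb z_end.
have pos_k := d_pos k; have fit_k := d_fit k.
have [|||S [S_ge sumS]] := IH (z + d k); [lia | lia | by right; exists k; rewrite yk |].
have kS : k \notin S by apply/negP => /S_ge; lia.
exists (k |: S); split; last by rewrite big_setU1 //= sumS; lia.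
by move=> k'; rewrite !inE => /predU1P[->|/S_ge]; lia.
Qed.

Lemma double_cover_subset_sum : exists S : {set K}, \sum_(k in S) d k = b.
Proof.
have [S [_ sumS]] := tiling_suffix (leq_subr 0 b) (leq0n b) (or_introl erefl).
by exists S; rewrite sumS subn0.
Qed.
End DoubleCover.

Section LongChain.
Variables (u : nat -> nat) (T b : nat).
Hypothesis chain_prec : forall i j, i < j -> j <= T -> u i + 2 * b <= u j.
Hypothesis chain_end : forall i, i <= T -> u i + 2 * b <= (2 * T + 3) * b.

Definition chain_idle (x : nat) : Prop :=
  forall i, i <= T -> ~~ ((u i <= x) && (x < u i + 2 * b)).

Lemma chain_start_ge i d : i + d <= T -> u i + 2 * b * d <= u (i + d).
Proof.
elim: d => [|d IH] le_idT; first by rewrite muln0 !addn0.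
have := @chain_prec (i + d) (i + d.+1) ltac:(lia) le_idT.
by have := IH ltac:(lia); rewrite mulnS addnS; lia.
Qed.

Lemma chain_start_bounds i : i <= T -> 2 * b * i <= u i <= 2 * b * i + b.
Proof.
move=> le_iT; have := @chain_start_ge 0 i le_iT; have := chain_end (leqnn T).
have := @chain_start_ge i (T - i); rewrite subnKC // => /(_ (leqnn T)).
have -> : T = i + (T - i) by rewrite subnKC.
by move: (T - i) => d; rewrite !add0n mulnDr !mulnDl; nia.
Qed.

Lemma chain_busy_high m r : b <= r < 2 * b -> 2 * b * m + r < (2 * T + 3) * b ->
  ~ chain_idle (2 * b * m + r).
Proof.
move=> /andP[ler ltr] lt_end idle; have le_mT : m <= T by nia.
by move: (idle m le_mT); have := chain_start_bounds le_mT; lia.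
Qed.

Lemma chain_idle_unique z m m' : z < b -> m <= T.+1 -> m' <= T.+1 ->
  chain_idle (2 * b * m + z) -> chain_idle (2 * b * m' + z) -> m = m'.
Proof.
move=> ltzb; wlog lt_mm' : m m' / m < m'.
  move=> wlog_lt le_m le_m' idle idle'.
  by case: (ltngtP m m') => [lt|lt|//]; [|symmetry]; apply: wlog_lt.
case: m' lt_mm' => // n le_mn _ le_nT idle idle'.
have le_mT : m <= T by lia.
have late : 2 * b * m + z < u m.
  by move: (idle m le_mT); have := chain_start_bounds le_mT; lia.
have := @chain_start_ge m (n - m); rewrite subnKC // => /(_ le_nT).
move: (idle' n le_nT); have := chain_start_bounds le_nT.
rewrite mulnBr mulnS; nia.
Qed.

(* The idle time is at the first index m where job m starts after 2bm + z. *)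
Lemma chain_idle_exists z : z < b -> exists2 m, m <= T.+1 & chain_idle (2 * b * m + z).
Proof.
move=> ltzb.
have late_ex : exists m, (T < m) || (2 * b * m + z < u m) by exists T.+1; rewrite ltnSn.
case: (ex_minnP late_ex) => m late_m first_late.
have le_mT1 : m <= T.+1 by apply: first_late; rewrite ltnSn.
exists m => // i le_iT; rewrite negb_and -ltnNge -leqNgt.
case: (ltnP i m) => [lt_im | le_mi].
- have : ~~ ((T < i) || (2 * b * i + z < u i)).
    by apply/negP => /first_late; lia.
  have := leq_mul (leqnn (2 * b)) lt_im.
  by rewrite negb_or -leqNgt mulnS => ? /andP[_ ?]; apply/orP; right; lia.
- apply/orP; left; have le_mT : m <= T by lia.
  move: late_m; rewrite ltnNge le_mT /= => late_m.
  by have := @chain_start_ge m (i - m); rewrite subnKC // => /(_ ltac:(lia)); lia.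
Qed.

End LongChain.

Definition chain_of (t : nat) (j : job t) : option bool :=
  match j with
  | inl _ => None
  | inr (inl _) => Some false
  | inr (inr _) => Some true
  end.

Definition long_job (t : nat) (c : bool) (m : 'I_t.+1) : job t :=
  inr (if c then inr m else inl m).

Lemma prec_long t c (m m' : 'I_t.+1) : prec (long_job c m) (long_job c m') = (m < m').
Proof. by case: c. Qed.

Lemma prec_total t (i j : job t) : chain_of i = chain_of j -> [\/ i = j, prec i j | prec j i].
Proof.
case: i => [k|[k|k]]; case: j => [k'|[k'|k']] //= _;
  by case: (ltngtP k k') => [||/val_inj->]; constructor.
Qed.

Lemma chain_of_long t (j : job t) c : chain_of j = Some c -> exists m, j = long_job c m.
Proof. by case: j => [//|[m|m]] [<-]; exists m. Qed.

Lemma card_option_bool (P : pred (option bool)) : #|P| = P None + P (Some false) + P (Some true).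
Proof.
rewrite -sum1_card big_mkcond (bigD1 None) //= (bigD1 (Some false)) //=.
rewrite (bigD1 (Some true)) //= big_pred0 => [|[[]|]] //.
by rewrite !unfold_in addn0 addnA; do 3 case: (P _).
Qed.

Section Active.
Variables (t : nat) (p s : job t -> nat).
Hypothesis s_prec : forall i j, prec i j -> s i + p i <= s j.

Local Notation act := (active p s).

Lemma active_chain_inj x : {in [pred j | act x j] &, injective (@chain_of t)}.
Proof.
move=> i j; rewrite !inE => /andP[si ei] /andP[sj ej] /prec_total[//|/s_prec|/s_prec]; lia.
Qed.

Definition busy (c : option bool) (x : nat) : bool := [exists j, act x j && (chain_of j == c)].

Lemma busy_of_active x j : act x j -> busy (chain_of j) x.
Proof. by move=> act_j; apply/existsP; exists j; rewrite act_j eqxx. Qed.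

Lemma card_active x :
  #|[pred j | act x j]| = busy None x + busy (Some false) x + busy (Some true) x.
Proof.
rewrite -(card_in_imset (active_chain_inj (x := x))).
rewrite -[RHS](card_option_bool [pred c | busy c x]); apply: eq_card => c; rewrite inE.
apply/imsetP/existsP => [[j act_j ->]|[j /andP[act_j /eqP <-]]].
  by exists j; rewrite -topredE /= in act_j; rewrite act_j eqxx.
by exists j.
Qed.
End Active.

Section Prefix.
Variables (t : nat) (a : 'I_t -> nat).

Definition prefix (A : {set 'I_t}) (m : nat) : nat := \sum_(i in A | i < m) a i.

Lemma prefix_mono (A : {set 'I_t}) m m' : m <= m' -> prefix A m <= prefix A m'.
Proof.
move=> le_mm'; apply: sub_le_big => // [x y|i /andP[-> lt_im]]; first exact: leq_addr.
exact: leq_trans lt_im le_mm'.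
Qed.

Lemma prefix_le (A : {set 'I_t}) m : prefix A m <= \sum_(i in A) a i.
Proof. by apply: sub_le_big => // [x y|i /andP[]]; first exact: leq_addr. Qed.

Lemma prefix_succ (A : {set 'I_t}) (k : 'I_t) : k \in A -> prefix A k.+1 = prefix A k + a k.
Proof.
move=> kA; rewrite /prefix (bigD1 k) /=; last by rewrite kA ltnSn.
rewrite addnC; congr (_ + _); apply: eq_bigl => i; rewrite ltnS leq_eqVlt.
by case: (eqVneq i k) => [->|ne]; rewrite ?ltnn ?andbF //= andbT val_eqE (negbTE ne).
Qed.
End Prefix.

Section PartitionSchedule.
Variables (t b : nat) (a : 'I_t -> nat) (S : {set 'I_t}).
Hypothesis sum_S : \sum_(i in S) a i = b.
Hypothesis sum_notS : \sum_(i in ~: S) a i = b.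

Definition side (c : bool) : {set 'I_t} := if c then ~: S else S.

Lemma prefix_side_le c m : prefix a (side c) m <= b.
Proof. by case: c; [rewrite -sum_notS | rewrite -sum_S]; exact: prefix_le. Qed.

Lemma mem_side_notin (k : 'I_t) : k \in side (k \notin S).
Proof. by rewrite /side; case: ifP; rewrite ?inE // => /negbFE. Qed.

Definition partition_schedule (j : job t) : nat :=
  match j with
  | inl k => 2 * b * k.+1 + prefix a (side (k \notin S)) k
  | inr (inl m) => 2 * b * m + prefix a (side false) m
  | inr (inr m) => 2 * b * m + prefix a (side true) m
  end.

Local Notation sched := partition_schedule.

Lemma schedule_long c m : sched (long_job c m) = 2 * b * m + prefix a (side c) m.
Proof. by case: c. Qed.

Lemma schedule_short_end (k : 'I_t) : sched (inl k) + a k <= 2 * b * k.+1 + b.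
Proof.
rewrite /= -addnA -prefix_succ ?mem_side_notin //.
by rewrite leq_add2l prefix_side_le.
Qed.

Lemma schedule_prec i j : prec i j -> sched i + ptime b a i <= sched j.
Proof.
have scale := leq_mul (leqnn (2 * b)).
case: i => [k|[m|m]]; case: j => [k'|[m'|m']] //= lt.
- by have := schedule_short_end k; have := scale _ _ lt; rewrite /= !mulnS; lia.
- by have := prefix_mono a S (ltnW lt); have := scale _ _ lt; rewrite !mulnS; lia.
- by have := prefix_mono a (~: S) (ltnW lt); have := scale _ _ lt; rewrite !mulnS; lia.
Qed.

Lemma schedule_end j : sched j + ptime b a j <= (2 * t + 3) * b.
Proof.
have scale := leq_mul (leqnn (2 * b)).
case: j => [k|[m|m]].
- by have := schedule_short_end k; have := scale _ _ (ltn_ord k); rewrite /= !mulnS; lia.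
- by have := prefix_side_le false m; have := scale _ _ (ltnSE (ltn_ord m)); rewrite /=; lia.
- by have := prefix_side_le true m; have := scale _ _ (ltnSE (ltn_ord m)); rewrite /=; lia.
Qed.

Lemma short_long_disjoint x (k : 'I_t) m :
  active (ptime b a) sched x (inl k) -> ~~ active (ptime b a) sched x (long_job (k \notin S) m).
Proof.
rewrite /active schedule_long /=; set c := k \notin S; move=> /andP[start_k end_k].
have := prefix_succ a (mem_side_notin k); rewrite -/c => P_succ.
case: (leqP (m : nat) k) => [le_mk | lt_km].
- have := prefix_mono a (side c) le_mk; have := leq_mul (leqnn (2 * b)) le_mk.
  by rewrite mulnS in start_k; lia.
- have := prefix_mono a (side c) lt_km; have := leq_mul (leqnn (2 * b)) lt_km.
  by lia.
Qed.

Lemma short_side_idle x k : active (ptime b a) sched x (inl k) ->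
  ~~ busy (ptime b a) sched (Some (k \notin S)) x.
Proof.
move=> act_k; apply/existsP => -[j /andP[act_j /eqP /chain_of_long[m ej]]].
by move: act_j; rewrite ej; apply/negP; apply: short_long_disjoint.
Qed.

Lemma schedule_capacity x : #|[pred j | active (ptime b a) sched x j]| <= 2.
Proof.
rewrite (card_active schedule_prec).
case: (boolP (busy _ _ None x)) => [/existsP[[k /andP[act_k _]|[] ? /andP[_ //]]]|_].
  by case: (k \notin S) (short_side_idle act_k) => /negbTE->; case: (busy _ _ _ x).
by case: (busy _ _ _ _); case: (busy _ _ _ _).
Qed.

Lemma partition_schedule_feasible :
  feasible2 (ptime b a) (@prec t) sched /\ makespan_le (ptime b a) sched ((2 * t + 3) * b).
Proof.
by split; [split; [exact: schedule_prec | exact: schedule_capacity] | exact: schedule_end].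
Qed.
End PartitionSchedule.

Section ScheduleToPartition.
Variables (t b : nat) (a : 'I_t -> nat) (s : job t -> nat).
Hypothesis a_pos : forall i, 0 < a i.
Hypothesis sum_a : \sum_(i < t) a i = 2 * b.
Hypothesis b_pos : 0 < b.
Hypothesis s_prec : forall i j, prec i j -> s i + ptime b a i <= s j.
Hypothesis s_cap : forall x, #|[pred j | active (ptime b a) s x j]| <= 2.
Hypothesis s_end : forall j, s j + ptime b a j <= (2 * t + 3) * b.

Local Notation act := (active (ptime b a) s).
Local Notation busy := (busy (ptime b a) s).
Local Notation horizon := ((2 * t + 3) * b).

Lemma total_work : \sum_j ptime b a j = 2 * horizon.
Proof. by rewrite !big_sumType /= sum_a !sum_nat_const !card_ord; lia. Qed.

Lemma card_active_full x : x < horizon -> #|[pred j | act x j]| = 2.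
Proof.
apply: (sum_bounded_eq (f := fun x => #|[pred j | act x j]|)) => [y _|]; first exact: s_cap.
by rewrite sum_card_active // total_work mulnC.
Qed.

Lemma busy_count x : x < horizon -> busy None x + busy (Some false) x + busy (Some true) x = 2.
Proof. by move=> lt_x; rewrite -(card_active s_prec) card_active_full. Qed.

Lemma idle_long_busy_short c x : x < horizon -> ~~ busy (Some c) x -> busy None x.
Proof.
move=> lt_x idle; have := busy_count lt_x.
by case: c idle => /negbTE->; case: (busy None x); case: (busy _ x).
Qed.

Lemma busy_some_long x : x < horizon -> busy (Some false) x || busy (Some true) x.
Proof.
by move=> /busy_count; case: (busy None x); case: (busy (Some false) x); case: (busy _ x).
Qed.

Lemma busy_short_idle_long x : busy None x -> exists c, ~~ busy (Some c) x.
Proof.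
move=> busy0; have := s_cap x; rewrite (card_active s_prec) busy0.
case B1: (busy (Some false) x); last by exists false; rewrite B1.
by case B2: (busy (Some true) x); last by exists true; rewrite B2.
Qed.

(* Only meaningful for m <= t: [inord] sends larger indices to 0. *)
Definition start (c : bool) (m : nat) : nat := s (long_job c (inord m)).

Lemma start_prec c i j : i < j -> j <= t -> start c i + 2 * b <= start c j.
Proof.
move=> lt_ij le_jt; have := @s_prec (long_job c (inord i)) (long_job c (inord j)).
by rewrite prec_long !inordK; [case: c; apply | lia | lia].
Qed.

Lemma start_end c i : i <= t -> start c i + 2 * b <= horizon.
Proof. by move=> _; have := s_end (long_job c (inord i)); case: c. Qed.

Lemma idle_long_chain c x : ~~ busy (Some c) x <-> chain_idle (start c) t b x.
Proof.
split=> [idle i le_it | idle].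
  apply: contra idle => act_i; apply/existsP; exists (long_job c (inord i)).
  by case: c act_i => act_i; rewrite /active /= act_i.
apply/existsP => -[j /andP[act_j /eqP /chain_of_long[m ej]]].
by move: act_j (idle m (ltn_ord m)); rewrite ej /start inord_val /active; case: (c) => /= ->.
Qed.

Lemma active_lt_horizon x j : act x j -> x < horizon.
Proof. by have := s_end j; rewrite /active; lia. Qed.

Lemma short_active_residue x k : act x (inl k) -> x %% (2 * b) < b.
Proof.
move=> act_k; have [c /idle_long_chain idle] := busy_short_idle_long (busy_of_active act_k).
rewrite ltnNge; apply/negP => high.
have lt_2b : x %% (2 * b) < 2 * b by rewrite ltn_mod; lia.
have := active_lt_horizon act_k; rewrite [in X in X < _](divn_eq x (2 * b)) mulnC => lt_x.
apply: (chain_busy_high (@start_prec c) (@start_end c) _ lt_x); first by rewrite high.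
by rewrite mulnC -divn_eq.
Qed.

Definition window (k : 'I_t) : nat := s (inl k) %/ (2 * b).
Definition offset (k : 'I_t) : nat := s (inl k) %% (2 * b).

Lemma short_start k : s (inl k) = 2 * b * window k + offset k.
Proof. by rewrite mulnC -divn_eq. Qed.

Lemma short_fits k : offset k + a k <= b.
Proof.
have act_start : act (s (inl k)) (inl k) by rewrite /active /=; have := a_pos k; lia.
have lt_off : offset k < b := short_active_residue act_start.
rewrite leqNgt; apply/negP => overflow.
have act_mid : act (s (inl k) + (b - offset k)) (inl k) by rewrite /active /=; lia.
have := short_active_residue act_mid.
rewrite short_start -addnA subnKC ?(ltnW lt_off) // mulnC modnMDl modn_small ?ltnn //; lia.
Qed.

Lemma short_active_covers k m z : z < b -> act (2 * b * m + z) (inl k) ->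
  covers offset a k z /\ m = window k.
Proof.
move=> lt_zb; have := short_fits k; rewrite /active /= short_start /covers => fit /andP[lo hi].
have em : m = window k.
  case: (ltngtP m (window k)) => // [lt_m|lt_w].
  - by have := leq_mul (leqnn (2 * b)) lt_m; rewrite mulnS; lia.
  - by have := leq_mul (leqnn (2 * b)) lt_w; rewrite mulnS; lia.
by rewrite em in lo hi *; split => //; lia.
Qed.

Lemma covers_short_active k z : covers offset a k z -> act (2 * b * window k + z) (inl k).
Proof. by rewrite /covers /active /= short_start; lia. Qed.

Lemma window_le w z : 2 * b * w + z < horizon -> w <= t.+1.
Proof. by nia. Qed.

Lemma short_cover_unique c z k k' : z < b ->
  covers offset a k z -> covers offset a k' z ->
  ~~ busy (Some c) (2 * b * window k + z) -> ~~ busy (Some c) (2 * b * window k' + z) ->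
  k = k'.
Proof.
move=> lt_zb cov cov' /idle_long_chain idle /idle_long_chain idle'.
have act_k := covers_short_active cov; have act_k' := covers_short_active cov'.
have ew := chain_idle_unique (@start_prec c) (@start_end c) lt_zb
  (window_le (active_lt_horizon act_k)) (window_le (active_lt_horizon act_k')) idle idle'.
rewrite -ew in act_k'.
by case: (active_chain_inj s_prec act_k act_k' erefl).
Qed.

Lemma short_double_cover z : z < b ->
  exists k1 k2, [/\ k1 != k2, covers offset a k1 z & covers offset a k2 z].
Proof.
move=> lt_zb.
have gap c : exists2 k, covers offset a k z & ~~ busy (Some c) (2 * b * window k + z).
  have [m le_mt /idle_long_chain idle] := chain_idle_exists (@start_prec c) lt_zb.
  have lt_x : 2 * b * m + z < horizon.
    by have := leq_mul (leqnn (2 * b)) le_mt; rewrite mulnS; lia.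
  have /existsP[[k /andP[act_k _]|[] j /andP[_ //]]] := idle_long_busy_short lt_x idle.
  by have [cov em] := short_active_covers lt_zb act_k; exists k; rewrite -?em.
have [k1 cov1 idle1] := gap false; have [k2 cov2 idle2] := gap true.
exists k1, k2; split => //; apply/eqP => ek; rewrite -ek in idle2.
have := busy_some_long (active_lt_horizon (covers_short_active cov1)).
by rewrite (negbTE idle1) (negbTE idle2).
Qed.

Lemma short_no_triple_cover z k1 k2 k3 : z < b ->
  covers offset a k1 z -> covers offset a k2 z -> covers offset a k3 z ->
  [|| k1 == k2, k1 == k3 | k2 == k3].
Proof.
move=> lt_zb cov1 cov2 cov3.
have idle_chain k : covers offset a k z -> exists c, ~~ busy (Some c) (2 * b * window k + z).
  by move=> /covers_short_active/busy_of_active/busy_short_idle_long.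
have [c1 idle1] := idle_chain _ cov1; have [c2 idle2] := idle_chain _ cov2.
have [c3 idle3] := idle_chain _ cov3.
have same := short_cover_unique lt_zb.
have [e12|e13|e23] : [\/ c1 = c2, c1 = c3 | c2 = c3].
  by case: (c1) (c2) (c3) => [] [] []; constructor.
- by rewrite -e12 in idle2; rewrite (same _ _ _ cov1 cov2 idle1 idle2) eqxx.
- by rewrite -e13 in idle3; rewrite (same _ _ _ cov1 cov3 idle1 idle3) eqxx orbT.
- by rewrite -e23 in idle3; rewrite (same _ _ _ cov2 cov3 idle2 idle3) eqxx !orbT.
Qed.

Lemma schedule_partition : exists S : {set 'I_t}, \sum_(i in S) a i = b.
Proof.
exact: (double_cover_subset_sum a_pos short_fits short_double_cover short_no_triple_cover).
Qed.
End ScheduleToPartition.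

Lemma sum_set_setC (I : finType) (S : {set I}) (F : I -> nat) :
  \sum_(i in S) F i + \sum_(i in ~: S) F i = \sum_i F i.
Proof. by rewrite [RHS](bigID (mem S)); congr (_ + _); apply: eq_bigl => i; rewrite !inE. Qed.

Theorem mainTheorem2 (t b : nat) (a : 'I_t -> nat)
  (Hpos : forall i, 0 < a i) (Hsum : \sum_(i < t) a i = 2 * b) :
  (exists S : {set 'I_t}, \sum_(i in S) a i = \sum_(i in ~: S) a i) <->
  (exists s : job t -> nat,
     feasible2 (ptime b a) (@prec t) s /\
     makespan_le (ptime b a) s ((2 * t + 3) * b)).
Proof.
have halves (S : {set 'I_t}) : \sum_(i in S) a i + \sum_(i in ~: S) a i = 2 * b.
  by rewrite sum_set_setC.
split=> [[S balanced] | [s [[s_prec s_cap] s_end]]].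
  have := halves S; rewrite balanced => sum2.
  exists (partition_schedule b a S).
  by apply: partition_schedule_feasible; lia.
have [S sum_S] : exists S : {set 'I_t}, \sum_(i in S) a i = b.
  case: (posnP b) => [-> | b_pos]; first by exists set0; rewrite big_set0.
  exact: schedule_partition Hpos Hsum b_pos s_prec s_cap s_end.
by exists S; have := halves S; lia.
Qed.
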